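(* Let $Y\in\mathbb{R}^{M\times I}$ and $X\in\mathbb{R}^{N\times I}$ be nonnegative output and input data of $I$ DMUs, fix a DMU $\hat\imath$, an output index $m$, and $\sigma\ge0$, and let $\theta^{\hat\imath}$ be the nominal efficiency score of DMU $\hat\imath$. Let $\bar Y$ equal $Y$ except that the single entry $Y_{m\hat\imath}$ is replaced by $Y_{m\hat\imath}+\Delta_{m\hat\imath}$ (assumed nonnegative), and let $\gamma$ be the efficiency score of DMU $\hat\imath$ computed from $(\bar Y,X)$. If $\Delta_{m\hat\imath}=\sigma$ then $\gamma\ge\theta^{\hat\imath}$; if $\Delta_{m\hat\imath}=-\sigma$ then $\gamma\le\theta^{\hat\imath}$.
   Context: Input-oriented BCC DEA: the efficiency score of DMU $k$ with data $(X,Y)$ is $\min\{\theta: Y\lambda\ge y^k,\ X\lambda\le\theta x^k,\ e^T\lambda=1,\ \lambda\ge0\}$, where $y^k,x^k$ are the $k$-th columns and $e$ is the all-ones vector; the perturbed entry appears both in the $\hat\imath$-th column of $\bar Y$ and in the right-hand side $\bar y^{\hat\imath}$. *)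

From HB Require Import structures.
From mathcomp Require Import all_boot all_order all_algebra.
From mathcomp Require Import all_classical all_reals ereal.
Set Implicit Arguments. Unset Strict Implicit. Unset Printing Implicit Defensive.
Import Order.TTheory GRing.Theory Num.Theory.
Local Open Scope ring_scope.
Local Open Scope classical_set_scope.

Definition bcc_feasible (R : realType) (M N I : nat)
  (Y : 'M[R]_(M, I)) (X : 'M[R]_(N, I)) (k : 'I_I) (theta : R) : Prop :=
  exists lam : 'cV[R]_I,
    [/\ (forall j, 0 <= lam j 0),
        \sum_j lam j 0 = 1,
        (forall r, Y r k <= (Y *m lam) r 0) &
        (forall n, (X *m lam) n 0 <= theta * X n k)].

Definition bcc_score (R : realType) (M N I : nat)
  (Y : 'M[R]_(M, I)) (X : 'M[R]_(N, I)) (k : 'I_I) : \bar R :=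
  ereal_inf [set (theta%:E)%E | theta in [set theta | bcc_feasible Y X k theta]].

Definition perturb_entry (R : realType) (M I : nat)
  (Y : 'M[R]_(M, I)) (m : 'I_M) (i : 'I_I) (delta : R) : 'M[R]_(M, I) :=
  \matrix_(r, j) (if (r == m) && (j == i) then Y r j + delta else Y r j).

(** The perturbed entry enters both the constraint matrix and the right-hand
    side of the output constraint of DMU [ih].  For a convex weight [lam] the
    slack of that constraint therefore changes by [- delta * (1 - lam ih)],
    which has the sign of [- delta] because [lam ih <= 1].  A positive
    perturbation thus shrinks the feasible set (the score can only grow) and a
    negative one enlarges it (the score can only drop). *)

From HB Require Import structures.
From mathcomp Require Import all_boot all_order all_algebra.
From mathcomp Require Import all_classical all_reals ereal.
From mathcomp Require Import ring.
Import Order.TTheory GRing.Theory Num.Theory.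
Local Open Scope ring_scope.

Section BCCPerturbation.

Variables (R : realType) (M N I : nat).
Implicit Types (Y : 'M[R]_(M, I)) (X : 'M[R]_(N, I)) (lam : 'cV[R]_I).

Lemma cvx_weight_le1 lam (i : 'I_I) :
  (forall j, 0 <= lam j 0) -> \sum_j lam j 0 = 1 -> lam i 0 <= 1.
Proof.
move=> lam_ge0 <-; rewrite (bigD1 i) //= lerDl.
by apply: sumr_ge0 => j _; exact: lam_ge0.
Qed.

Lemma bcc_score_le Y1 Y2 X (k : 'I_I) :
  (forall t, bcc_feasible Y1 X k t -> bcc_feasible Y2 X k t) ->
  (bcc_score Y2 X k <= bcc_score Y1 X k)%E.
Proof.
by move=> sub12; apply: ereal_inf_le_tmp => _ [t /sub12 ? <-]; exists t.
Qed.

Lemma bcc_feasible_slack Y1 Y2 X (k : 'I_I) t :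
  (forall lam, (forall j, 0 <= lam j 0) -> \sum_j lam j 0 = 1 ->
     forall r, (Y1 *m lam) r 0 - Y1 r k <= (Y2 *m lam) r 0 - Y2 r k) ->
  bcc_feasible Y1 X k t -> bcc_feasible Y2 X k t.
Proof.
move=> slack12 [lam [lam_ge0 lam_sum1 outY1 inX]]; exists lam; split=> // r.
rewrite -subr_ge0; apply: le_trans (slack12 _ lam_ge0 lam_sum1 r).
by rewrite subr_ge0.
Qed.

Lemma mulmx_perturb_entry Y (m : 'I_M) (i : 'I_I) delta lam r :
  (perturb_entry Y m i delta *m lam) r 0 =
  (Y *m lam) r 0 + (if r == m then delta * lam i 0 else 0).
Proof.
rewrite !mxE; have [->|rm] := eqVneq r m; last first.
  by rewrite addr0; apply: eq_bigr => j _; rewrite mxE (negbTE rm).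
rewrite (bigD1 i) //= [X in _ = X + _](bigD1 i) //= !mxE !eqxx mulrDl addrAC.
by congr (_ + _ + _); apply: eq_bigr => j /negbTE nji; rewrite mxE nji andbF.
Qed.

Lemma perturb_entry_slack Y (m : 'I_M) (i : 'I_I) delta lam r :
  (perturb_entry Y m i delta *m lam) r 0 - perturb_entry Y m i delta r i =
  (Y *m lam) r 0 - Y r i - (if r == m then delta * (1 - lam i 0) else 0).
Proof.
rewrite mulmx_perturb_entry /perturb_entry !mxE eqxx andbT.
by case: (r == m); rewrite ?subr0 ?addr0 //; ring.
Qed.

Lemma bcc_score_perturb_ge0 Y X (m : 'I_M) (i : 'I_I) delta : 0 <= delta ->
  (bcc_score Y X i <= bcc_score (perturb_entry Y m i delta) X i)%E.
Proof.
move=> delta_ge0; apply: bcc_score_le => t.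
apply: bcc_feasible_slack => lam lam_ge0 lam_sum1 r.
rewrite perturb_entry_slack gerBl; case: (r == m) => //.
by rewrite mulr_ge0 // subr_ge0 cvx_weight_le1.
Qed.

Lemma bcc_score_perturb_le0 Y X (m : 'I_M) (i : 'I_I) delta : delta <= 0 ->
  (bcc_score (perturb_entry Y m i delta) X i <= bcc_score Y X i)%E.
Proof.
move=> delta_le0; apply: bcc_score_le => t.
apply: bcc_feasible_slack => lam lam_ge0 lam_sum1 r.
rewrite perturb_entry_slack lerBrDl gerDr; case: (r == m) => //.
by rewrite mulr_le0_ge0 // subr_ge0 cvx_weight_le1.
Qed.

End BCCPerturbation.

Theorem lemma5 (R : realType) (M N I : nat)
  (Y : 'M[R]_(M, I)) (X : 'M[R]_(N, I)) (ih : 'I_I) (m : 'I_M)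
  (sigma delta : R) :
  (forall r j, 0 <= Y r j) -> (forall n j, 0 <= X n j) ->
  0 <= sigma ->
  0 <= Y m ih + delta ->
  (delta = sigma ->
     (bcc_score Y X ih <= bcc_score (perturb_entry Y m ih delta) X ih)%E) /\
  (delta = - sigma ->
     (bcc_score (perturb_entry Y m ih delta) X ih <= bcc_score Y X ih)%E).
Proof.
move=> _ _ sigma_ge0 _; split=> ->.
- exact: bcc_score_perturb_ge0.
- by apply: bcc_score_perturb_le0; rewrite oppr_le0.
Qed.
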